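(* Let $h\ge r$ be positive integers and let $0<\beta<1$ be a real. There is a positive real $\alpha$ depending on $h,r,\beta$ such that the following holds. Let $G$ be any graph on $n$ vertices and let $p=p_r(G)$. For $i,j\in[h]$ let $\mathcal{A}_{i,j}$ denote the set of $i$-good sequences of length $j$ relative to $(\alpha,\beta,h,r)$ in $V(G)$. Then for each $i\in[h]$ and $r\le j\le h$, \[\sum_{S\in\mathcal{A}_{i,j}}|N(S)|^r\geq (1-\beta)\,n^{j+r}p^{jr}.\] In particular, there exists an $i$-good sequence $S$ of length $j$ such that $|N(S)|\ge(1-\beta)^{1/r}p^j n$.
   Context: All graphs are finite and simple. For a positive integer $r$, $p_r(G)=t_{K_{1,r}}(G)^{1/r}=\frac1n\left(\frac1n\sum_{v\in V(G)}d(v)^r\right)^{1/r}$ where $n=|G|$. A sequence in a set $W$ is a finite sequence of elements of $W$ (repetitions allowed); its length $|S|$ counts multiplicity; $W^k$ denotes the set of sequences of length $k$ in $W$. For a sequence $S$ in $V(G)$, $N(S)$ is the set of vertices adjacent to every vertex of $S$. Goodness: fix reals $0<\alpha,\beta<1$ and positive integers $h,r$, and let $p=p_r(G)$. A sequence $T$ in $V(G)$ is $0$-good if $|N(T)|\ge\alpha p^{|T|}n$. For $1\le i\le h$, a sequence $S$ in $V(G)$ of length at most $h$ is $i$-good if $S$ is $0$-good and for each $|S|\le k\le h$, the number of $(i-1)$-good sequences in $N(S)^k$ is at least $(1-\beta)|N(S)|^k$. These are called $i$-good relative to $(\alpha,\beta,h,r)$. *)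

From HB Require Import structures.
From mathcomp Require Import all_boot all_order all_algebra.
From mathcomp Require Import reals exp.
Set Implicit Arguments. Unset Strict Implicit. Unset Printing Implicit Defensive.
Import Order.TTheory GRing.Theory Num.Theory.
Local Open Scope ring_scope.

(* A finite simple graph: vertex set T (a finType), adjacency e : rel T,
   assumed symmetric and irreflexive in the theorem. *)

Definition deg (T : finType) (e : rel T) (v : T) : nat := #|[set u | e v u]|.

Definition p_r (R : realType) (T : finType) (e : rel T) (r : nat) : R :=
  (#|T|%:R)^-1 *
  powR ((#|T|%:R)^-1 * \sum_(v : T) (deg e v)%:R ^+ r) (r%:R^-1).

Definition nbhd (T : finType) (e : rel T) (S : seq T) : {set T} :=
  [set v | all (fun u => e u v) S].

Fixpoint good (R : realType) (T : finType) (e : rel T)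
    (alpha beta : R) (h r : nat) (i : nat) (S : seq T) : bool :=
  let p := p_r R e r in
  let zero_good := alpha * p ^+ size S * (#|T|%:R) <= (#|nbhd e S|)%:R in
  match i with
  | 0 => zero_good
  | i'.+1 =>
      [&& (size S <= h)%N, zero_good &
        [forall k : 'I_h.+1, (size S <= k)%N ==>
          ((1 - beta) * (#|nbhd e S|%:R) ^+ k <=
           (#|[set t : k.-tuple T |
                 all (fun x => x \in nbhd e S) t &&
                 good e alpha beta h r i' t]|)%:R)]]
  end.

From HB Require Import structures.
From mathcomp Require Import all_boot all_order all_algebra.
From mathcomp Require Import reals exp.
From mathcomp Require Import ring lra zify.
Import Order.TTheory GRing.Theory Num.Theory.
Local Open Scope ring_scope.
Set Implicit Arguments. Unset Strict Implicit. Unset Printing Implicit Defensive.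

(* Write Q(j, m) = n ^ (j + m) p ^ (j m).  Double counting gives
   sum_(S in V^j) |N(S)| ^ r = sum_(t in V^r) |N(t)| ^ j, and sum_t |N(t)| = sum_v d(v) ^ r
   = n ^ (r + 1) p ^ r, so by the power-mean inequality all j-tuples together carry at
   least Q(j, r).  It therefore suffices to show that the non-i-good j-tuples carry at
   most beta Q(j, r), which is proved by induction on i for all moments m <= j <= h at
   once: a non-(i+1)-good S is either not 0-good, contributing at most alpha Q(j, m), or
   for some k >= j more than a beta-fraction of the k-tuples in N(S) are not i-good;
   splitting |N(S)| at a threshold, double counting turns the latter contribution into
   the order-j moment of the non-i-good k-tuples, bounded by the induction hypothesis
   with a smaller tolerance.  The tolerances are the iterates of
   t |-> beta (t / (4 (h + 1))) ^ (h + 1) starting from beta, and alpha is the h-th one.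
   The existence of a good S with a large neighbourhood is then pigeonhole. *)

Lemma card_tuples_in (T : finType) (A : {set T}) k :
  #|[set t : k.-tuple T | all (fun x => x \in A) t]| = (#|A| ^ k)%N.
Proof.
pose sA := {x : T | x \in A}.
have -> : [set t : k.-tuple T | all (fun x => x \in A) t] =
          [set map_tuple val t | t : k.-tuple sA].
  apply/setP => t; rewrite inE; apply/idP/imsetP => [tA | [u _ ->]]; last first.
    by apply/allP => x /mapP [y _ ->]; exact: (valP y).
  have sz : size (pmap (insub : T -> option sA) t) == k.
    by rewrite size_pmap_sub (all_count _ t) in tA *; rewrite (eqP tA) size_tuple.
  exists (Tuple sz) => //; apply: val_inj => /=.
  rewrite (pmap_filter (@insubK _ _ sA)); apply/esym/all_filterP.
  by apply: sub_all tA => x /= xA; rewrite insubT.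
rewrite card_imset; last first.
  by move=> u v /(congr1 val) /= /(inj_map val_inj) uv; apply: val_inj.
by rewrite card_tuple card_sig; congr (_ ^ _)%N; apply: eq_card => x; rewrite !inE.
Qed.

Section CommonNeighbourhood.
Variables (T : finType) (e : rel T).

Lemma sum_nbhd_tuple1 (R : pzSemiRingType) k :
  \sum_(S : 1.-tuple T) (#|nbhd e S|%:R : R) ^+ k = \sum_(v : T) (deg e v)%:R ^+ k.
Proof.
rewrite (reindex (fun v : T => [tuple v])) /=; last first.
  exists (fun t : 1.-tuple T => thead t) => [v _ //| t _].
  by apply: val_inj; case: t => [[|a [|b s]] //= _].
apply: eq_bigr => v _; congr ((_ %:R) ^+ _); apply: eq_card => u.
by rewrite !inE /= andbT.
Qed.

Hypothesis e_sym : symmetric e.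

Lemma all_in_nbhdC (S t : seq T) :
  all (fun x => x \in nbhd e S) t = all (fun x => x \in nbhd e t) S.
Proof.
by apply/allP/allP => tNS x xS; rewrite inE; apply/allP => y yt;
  move: (tNS y yt); rewrite inE => /allP /(_ x xS); rewrite e_sym.
Qed.

Lemma sum_card_tuples_in_nbhd j k (P : pred (k.-tuple T)) :
  (\sum_(S : j.-tuple T) #|[set t : k.-tuple T | all (fun x => x \in nbhd e S) t && P t]|
  = \sum_(t : k.-tuple T | P t) #|nbhd e t| ^ j)%N.
Proof.
under eq_bigr do rewrite -sum1dep_card.
rewrite (exchange_big_dep P) => [|S t _ /andP[] //].
apply: eq_bigr => t Pt.
rewrite sum1dep_card -card_tuples_in; apply: eq_card => S.
by rewrite !inE Pt andbT all_in_nbhdC.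
Qed.

Lemma sum_nbhd_exprC (R : pzSemiRingType) j k :
  \sum_(S : j.-tuple T) (#|nbhd e S|%:R : R) ^+ k =
  \sum_(t : k.-tuple T) (#|nbhd e t|%:R : R) ^+ j.
Proof.
have cardE (S : j.-tuple T) : (#|nbhd e S| ^ k)%N =
    #|[set t : k.-tuple T | all (fun x => x \in nbhd e S) t && predT t]|.
  by rewrite -card_tuples_in; apply: eq_card => t; rewrite !inE andbT.
under eq_bigr do rewrite -natrX cardE.
by rewrite -natr_sum sum_card_tuples_in_nbhd natr_sum; under eq_bigr do rewrite natrX.
Qed.

End CommonNeighbourhood.

Section SumInequalities.
Variable R : realDomainType.

Lemma chebyshev_sum_expr (I : finType) (x : I -> R) a :
  (forall i, 0 <= x i) ->
  (\sum_i x i ^+ a) * (\sum_i x i) <= #|I|%:R * \sum_i x i ^+ a.+1.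
Proof.
move=> x_ge0; pose f u v := x u ^+ a.+1 - x u ^+ a * x v.
have -> : #|I|%:R * \sum_i x i ^+ a.+1 = \sum_u \sum_(v : I) x u ^+ a.+1.
  by rewrite mulr_sumr; apply: eq_bigr => u _; rewrite sumr_const mulr_natl.
rewrite mulr_suml -subr_ge0 -sumrB.
have -> : \sum_u (\sum_(v : I) x u ^+ a.+1 - x u ^+ a * \sum_v x v) = \sum_u \sum_v f u v.
  by apply: eq_bigr => u _; rewrite mulr_sumr -sumrB.
(* Symmetrising, each pair (u, v) contributes (x u ^+ a - x v ^+ a) * (x u - x v) >= 0. *)
rewrite -(pmulrn_lge0 _ (isT : (0 < 2)%N)) mulr2n.
rewrite [X in _ + X]exchange_big -big_split /=.
apply: sumr_ge0 => u _; rewrite -big_split /=; apply: sumr_ge0 => v _.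
have -> : f u v + f v u = (x u ^+ a - x v ^+ a) * (x u - x v) by rewrite /f !exprS; ring.
have [uv | vu] := lerP (x u) (x v).
- rewrite mulr_le0 // subr_le0 //.
  exact: (lerXn2r a (x_ge0 u) (x_ge0 v) uv).
- have le_vu := ltW vu.
  rewrite mulr_ge0 // subr_ge0 //.
  exact: (lerXn2r a (x_ge0 v) (x_ge0 u) le_vu).
Qed.

Lemma power_mean_sum (I : finType) (x : I -> R) a :
  (forall i, 0 <= x i) ->
  (\sum_i x i) ^+ a.+1 <= #|I|%:R ^+ a * \sum_i x i ^+ a.+1.
Proof.
move=> x_ge0; elim: a => [|a IH]; first by rewrite mul1r.
have sum_ge0 : 0 <= \sum_i x i by apply: sumr_ge0.
rewrite exprSr (le_trans (ler_wpM2r sum_ge0 IH)) // exprSr -!mulrA.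
by rewrite ler_wpM2l ?exprn_ge0 // chebyshev_sum_expr.
Qed.

Lemma ler_sum_cover (I J : finType) (P P0 : pred I) (Q : J -> pred I) (f : I -> R) :
  (forall i, 0 <= f i) -> (forall i, P i -> P0 i \/ exists j, Q j i) ->
  \sum_(i | P i) f i <= \sum_(i | P0 i) f i + \sum_j \sum_(i | Q j i) f i.
Proof.
move=> f_ge0 cover; rewrite (exchange_big_dep predT) //= [X in _ <= X + _]big_mkcond.
rewrite [X in _ <= _ + X]big_mkcond -big_split /= big_mkcond /=.
apply: ler_sum => i _; have sumQ_ge0 : 0 <= \sum_(j | Q j i) f i by exact: sumr_ge0.
case: ifP => [/cover [P0i | [j Qji]] | _]; last by rewrite addr_ge0 //; case: ifP.
- by rewrite P0i lerDl.
- by rewrite (bigD1 j) //= addrCA lerDl addr_ge0 ?sumr_ge0 //; case: ifP.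
Qed.

Lemma exists_ge_of_sum_expr (I : finType) (P : pred I) (x : I -> R) (y : R) k :
  (0 < k)%N -> 0 < y -> (0 < #|I|)%N -> (forall i, 0 <= x i) ->
  #|I|%:R * y ^+ k <= \sum_(i | P i) x i ^+ k -> exists2 i, P i & y <= x i.
Proof.
move=> k_gt0 y_gt0 /card_gt0P [i0 _] x_ge0 sum_ge.
have [|/forallPn [i]] := boolP [forall i, P i ==> (x i < y)]; last first.
  by rewrite negb_imply -leNgt => /andP [Pi le_yx]; exists i.
move=> /forallP small; suff : \sum_(i | P i) x i ^+ k < \sum_(i : I) y ^+ k.
  by rewrite sumr_const -mulr_natl ltNge sum_ge.
rewrite big_mkcond /=; apply: ltr_sum => [|i _].
  by apply/hasP; exists i0; rewrite ?mem_index_enum.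
case: ifP => Pi; last exact: exprn_gt0.
by rewrite ltrXn2r ?gtn_eqF ?x_ge0 ?ltW // (implyP (small i)).
Qed.

End SumInequalities.

Lemma expr_le_threshold (R : realFieldType) (y L : R) m d :
  0 <= y -> 0 < L -> y ^+ m <= L ^+ m + y ^+ (m + d) / L ^+ d.
Proof.
move=> y_ge0 L_gt0; have Ld_gt0 : 0 < L ^+ d by rewrite exprn_gt0.
have [yL | Ly] := lerP y L.
  apply: ler_wpDr; first exact: divr_ge0 (exprn_ge0 _ y_ge0) (ltW Ld_gt0).
  exact: (lerXn2r m y_ge0 (ltW L_gt0) yL).
apply: ler_wpDl; first exact: exprn_ge0 (ltW L_gt0).
rewrite exprD ler_pdivlMr // ler_wpM2l ?exprn_ge0 //.
exact: (lerXn2r d (ltW L_gt0) y_ge0 (ltW Ly)).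
Qed.

Section DegreeMoments.
Variables (R : realType) (T : finType) (e : rel T) (r : nat).
Local Notation nv := (#|T|%:R : R).
Local Notation p := (p_r R e r).

Lemma p_r_ge0 : 0 <= p.
Proof. by rewrite mulr_ge0 ?invr_ge0 ?powR_ge0. Qed.

Lemma card_gt0_of_p_r_gt0 : 0 < p -> (0 < #|T|)%N.
Proof. by rewrite lt0n; apply: contraTneq => T0; rewrite /p_r T0 invr0 mul0r ltxx. Qed.

Hypothesis r_gt0 : (0 < r)%N.

Lemma sum_deg_expr : (0 < #|T|)%N -> \sum_(v : T) (deg e v)%:R ^+ r = nv ^+ r.+1 * p ^+ r.
Proof.
move=> T_gt0; have nv_neq0 : nv != 0 by rewrite pnatr_eq0 -lt0n.
have powRK (A : R) : 0 <= A -> (A `^ r%:R^-1) ^+ r = A.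
  move=> A_ge0; rewrite -powR_mulrn ?powR_ge0 // -powRrM mulVf ?powRr1 //.
  by rewrite pnatr_eq0 -lt0n.
rewrite /p_r exprMn powRK ?mulr_ge0 ?invr_ge0 ?sumr_ge0 // => [|v _]; last first.
  exact: exprn_ge0.
move: (\sum_v _) nv_neq0 => D; move: (#|T|%:R : R) => N N_neq0.
by rewrite exprVn exprS; field; rewrite N_neq0 expf_neq0.
Qed.

Hypothesis e_sym : symmetric e.

Lemma sum_nbhd_expr_ge j : (0 < #|T|)%N -> (0 < j)%N ->
  nv ^+ (j + r) * p ^+ (j * r) <= \sum_(S : j.-tuple T) (#|nbhd e S|%:R : R) ^+ r.
Proof.
case: j => // j T_gt0 _; rewrite (sum_nbhd_exprC e_sym).
have sum_nbhd : \sum_(t : r.-tuple T) (#|nbhd e t|%:R : R) = nv ^+ r.+1 * p ^+ r.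
  rewrite -sum_deg_expr // -sum_nbhd_tuple1 (sum_nbhd_exprC e_sym R 1 r).
  by apply: eq_bigr => t _; rewrite expr1.
have := power_mean_sum j (fun t : r.-tuple T => ler0n R #|nbhd e t|).
rewrite sum_nbhd card_tuple natrX => mean_ineq.
have nv_gt0 : 0 < nv by rewrite ltr0n.
rewrite -(ler_pM2l (exprn_gt0 j (exprn_gt0 r nv_gt0))).
apply: le_trans mean_ineq; rewrite mulrA -exprM -exprD [in X in _ <= X]exprMn -!exprM.
by rewrite [(j.+1 * r)%N]mulnC (_ : r * j + _ = r.+1 * j.+1)%N //; lia.
Qed.

End DegreeMoments.

(* In the step from i to i + 1 each of the h + 1 lengths k costs at most 2 δ with
   δ = t / (4 (h + 1)), i.e. t / 2 in total, provided the non-i-good moments are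
   bounded with tolerance beta δ ^ (h + 1). *)
Definition shrink (R : numFieldType) (beta : R) (h : nat) (t : R) : R :=
  beta * (t / (4 * h.+1)%:R) ^+ h.+1.

Section Shrink.
Variables (R : realFieldType) (beta : R) (h : nat).
Hypothesis beta01 : 0 < beta <= 1.

Lemma shrink_gt0_le_half t : 0 < t <= 1 -> 0 < shrink beta h t <= t / 2.
Proof.
case/andP: beta01 => beta_gt0 beta_le1 /andP [t_gt0 t_le1].
have h_ge1 : 1 <= h.+1%:R :> R by rewrite ler1n.
set δ := t / (4 * h.+1)%:R.
have δ_gt0 : 0 < δ by rewrite divr_gt0 // ltr0n muln_gt0.
have δ_le : δ <= t / 4.
  rewrite /δ natrM invfM mulrA ler_pdivrMr ?(lt_le_trans ltr01) //.
  by rewrite ler_pMr // divr_gt0.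
rewrite /shrink -/δ mulr_gt0 ?exprn_gt0 //=.
have δ_le1 : δ <= 1 by apply: le_trans δ_le _; lra.
apply: le_trans (_ : δ ^+ h.+1 <= _); first by rewrite ler_piMl // exprn_ge0 // ltW.
apply: le_trans (ler_iXnr (ltn0Sn h) (ltW δ_gt0) δ_le1) _.
by apply: le_trans δ_le _; lra.
Qed.

Lemma iter_shrink_gt0_le s t : 0 < t <= 1 -> 0 < iter s (shrink beta h) t <= t.
Proof.
move=> /andP [t_gt0 t_le1].
elim: s => [|s /andP [IH_gt0 IH_le]] /=; first by rewrite t_gt0 lexx.
have /andP [-> half] : 0 < shrink beta h (iter s (shrink beta h) t) <= iter s (shrink beta h) t / 2.
  by apply: shrink_gt0_le_half; rewrite IH_gt0 (le_trans IH_le t_le1).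
by apply: le_trans half _; lra.
Qed.

Lemma iter_shrink_le i s t : (i <= s)%N -> 0 < t <= 1 ->
  iter s (shrink beta h) t <= iter i (shrink beta h) t.
Proof.
move=> le_is t01; have /andP [iter_gt0 iter_le] := iter_shrink_gt0_le i t01.
have iter01 : 0 < iter i (shrink beta h) t <= 1.
  by rewrite iter_gt0 (le_trans iter_le) //; case/andP: t01.
by rewrite -(subnK le_is) iterD; case/andP: (iter_shrink_gt0_le (s - i) iter01).
Qed.

End Shrink.

Section Goodness.
Variables (R : realType) (T : finType) (e : rel T) (alpha beta : R) (h r : nat).
Local Notation nv := (#|T|%:R : R).
Local Notation p := (p_r R e r).
Local Notation nb S := (#|nbhd e S|%:R : R).
Local Notation good_at i := (good e alpha beta h r i).

Definition bad_moment_bound i (eps : R) := forall j m, (0 < m <= j)%N -> (j <= h)%N ->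
  \sum_(S : j.-tuple T | ~~ good_at i S) nb S ^+ m <= eps * nv ^+ (j + m) * p ^+ (j * m).

Definition good_ext i k (S : seq T) :=
  #|[set t : k.-tuple T | all (fun x => x \in nbhd e S) t && good_at i t]|.

Definition bad_ext i k (S : seq T) :=
  #|[set t : k.-tuple T | all (fun x => x \in nbhd e S) t && ~~ good_at i t]|.

Definition deficient i k (S : seq T) := (good_ext i k S)%:R < (1 - beta) * nb S ^+ k.

Lemma sum_const_tuples j (c : R) : \sum_(S : j.-tuple T) c = nv ^+ j * c.
Proof.
rewrite sumr_const (_ : #|_| = #|{: j.-tuple T}|); last exact: eq_card.
by rewrite card_tuple -[LHS]mulr_natl natrX.
Qed.

Lemma bad_moment_bound_le i eps1 eps2 :
  eps1 <= eps2 -> bad_moment_bound i eps1 -> bad_moment_bound i eps2.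
Proof.
move=> le_eps bound j m mj jh; apply: le_trans (bound j m mj jh) _.
by rewrite -!mulrA ler_wpM2r ?mulr_ge0 ?exprn_ge0 ?p_r_ge0.
Qed.

Lemma bad_moment_bound0 : 0 <= alpha <= 1 -> bad_moment_bound 0 alpha.
Proof.
move=> /andP [alpha_ge0 alpha_le1] j m /andP [m_gt0 _] _.
have p_ge0 := p_r_ge0 R e r.
set c := alpha * p ^+ (j * m) * nv ^+ m.
have -> : alpha * nv ^+ (j + m) * p ^+ (j * m) = \sum_(S : j.-tuple T) c.
  by rewrite sum_const_tuples /c exprD; ring.
rewrite big_mkcond; apply: ler_sum => S _; case: ifP => [|_]; last first.
  by rewrite /c !mulr_ge0 ?exprn_ge0.
rewrite /= size_tuple -ltNge => small.
have base_ge0 : 0 <= alpha * p ^+ j * nv by rewrite !mulr_ge0 ?exprn_ge0.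
apply: le_trans (_ : (alpha * p ^+ j * nv) ^+ m <= c).
  exact: (lerXn2r m (ler0n _ _) base_ge0 (ltW small)).
rewrite exprMn [(alpha * _) ^+ m]exprMn -exprM /c.
rewrite ler_wpM2r ?exprn_ge0 // ler_wpM2r ?exprn_ge0 //.
exact: ler_iXnr.
Qed.

Lemma not_goodS i (S : seq T) : (size S <= h)%N -> ~~ good_at i.+1 S ->
  ~~ good_at 0 S \/ exists k : 'I_h.+1, (size S <= k)%N && deficient i k S.
Proof.
move=> Sh; rewrite /= Sh /=; case: (_ <= _) => /=; last by left.
by move=> /forallPn [k]; rewrite negb_imply -ltNge => def; right; exists k.
Qed.

Lemma good_ext_add_bad_ext i k S : (good_ext i k S + bad_ext i k S = #|nbhd e S| ^ k)%N.
Proof.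
rewrite -card_tuples_in -(cardsID [set t : k.-tuple T | good_at i t]).
by congr (_ + _); apply: eq_card => t; rewrite !inE // andbC.
Qed.

Lemma deficient_bad_ext i k S : deficient i k S -> beta * nb S ^+ k < (bad_ext i k S)%:R.
Proof.
move: (good_ext_add_bad_ext i k S) => /(congr1 (fun n => n%:R : R)).
rewrite natrD natrX /deficient; lra.
Qed.

Lemma good_of_p_r_eq0 i (S : seq T) : p = 0 -> 0 <= beta -> (0 < size S <= h)%N -> good_at i S.
Proof.
move=> p0 beta_ge0; elim: i S => [|i IH] S /andP [S_gt0 Sh] /=.
  by rewrite p0 expr0n gtn_eqF // mulr0 mul0r.
rewrite Sh p0 expr0n gtn_eqF // mulr0 mul0r ler0n /=.
apply/forallP => k; apply/implyP => Sk.
rewrite (eq_card (B := [set t : k.-tuple T | all (fun x => x \in nbhd e S) t])) => [|t].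
  by rewrite card_tuples_in natrX ler_piMl ?exprn_ge0 // lerBlDr lerDl.
rewrite !inE; case: (all _ _) => //=; apply: IH.
by rewrite size_tuple (leq_trans S_gt0 Sk) -ltnS ltn_ord.
Qed.

Hypotheses (e_sym : symmetric e) (p_gt0 : 0 < p) (beta_gt0 : 0 < beta).

Lemma deficient_moment_le i k m d (S : seq T) (L : R) : 0 < L -> k = (m + d)%N ->
  deficient i k S -> nb S ^+ m <= L ^+ m + (bad_ext i k S)%:R / (beta * L ^+ d).
Proof.
move=> L_gt0 -> /deficient_bad_ext def.
apply: le_trans (expr_le_threshold m d (ler0n _ _) L_gt0) _.
rewrite lerD2l invfM mulrA ler_wpM2r ?invr_ge0 ?exprn_ge0 ?(ltW L_gt0) //.
by rewrite ler_pdivlMr // mulrC ltW.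
Qed.

Lemma sum_deficient_le i k j m (δ : R) : 0 < δ -> bad_moment_bound i (beta * δ ^+ h.+1) ->
  (0 < m <= j)%N -> (j <= k <= h)%N ->
  \sum_(S : j.-tuple T | deficient i k S) nb S ^+ m <=
    (δ ^+ m + δ ^+ (h.+1 - (k - m))) * nv ^+ (j + m) * p ^+ (j * m).
Proof.
move=> δ_gt0 bound /andP [m_gt0 mj] /andP [jk kh].
have nv_gt0 : 0 < nv by rewrite ltr0n (card_gt0_of_p_r_gt0 p_gt0).
set d := (k - m)%N; have kE : k = (m + d)%N by rewrite subnKC // (leq_trans mj jk).
(* Below the threshold L a tuple pays L ^ m; above it, a deficient S is charged to its
   non-i-good k-extensions, whose total is the order-j moment of the bad k-tuples. *)
set L := δ * nv * p ^+ j; have L_gt0 : 0 < L by rewrite !mulr_gt0 // exprn_gt0.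
apply: le_trans (_ : \sum_(S : j.-tuple T)
    (L ^+ m + (bad_ext i k S)%:R / (beta * L ^+ d)) <= _).
  rewrite [X in X <= _]big_mkcond; apply: ler_sum => S _; case: ifP => [def | _].
    exact: deficient_moment_le def.
  have [L_ge0 beta_ge0] := (ltW L_gt0, ltW beta_gt0).
  by rewrite addr_ge0 ?divr_ge0 ?mulr_ge0 ?exprn_ge0.
rewrite big_split /= sum_const_tuples -mulr_suml -natr_sum sum_card_tuples_in_nbhd //.
rewrite natr_sum; under eq_bigr do rewrite natrX.
have bad_k : \sum_(t : k.-tuple T | ~~ good_at i t) nb t ^+ j <=
    beta * δ ^+ h.+1 * nv ^+ (k + j) * p ^+ (k * j).
  by apply: bound; rewrite ?(leq_trans m_gt0 mj) ?jk.
have d_le : (d <= h.+1)%N by rewrite (leq_trans (leq_subr _ _)) // ltnW.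
apply: le_trans (lerD (lexx _) (ler_wpM2r _ bad_k)) _.
  by rewrite invr_ge0 mulr_ge0 ?exprn_ge0 ?ltW.
have δE : δ ^+ h.+1 = δ ^+ (h.+1 - d) * δ ^+ d by rewrite -exprD subnK.
rewrite /L δE kE [((m + d) * j)%N]mulnC mulnDr [p ^+ (_ + _)]exprD !exprM.
move: (p ^+ j) (exprn_gt0 j p_gt0) (#|T|%:R : R) nv_gt0 => q q_gt0 N N_gt0.
rewrite !exprMn !exprD le_eqVlt; apply/orP; left; apply/eqP; field.
by rewrite !expf_neq0 ?gt_eqF.
Qed.

Lemma bad_moment_boundS i (δ : R) : 0 <= alpha <= 1 -> 0 < δ <= 1 ->
  bad_moment_bound i (beta * δ ^+ h.+1) ->
  bad_moment_bound i.+1 (alpha + (h.+1 * 2)%:R * δ).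
Proof.
move=> alpha01 /andP [δ_gt0 δ_le1] bound j m mj jh.
have Q_ge0 : 0 <= nv ^+ (j + m) * p ^+ (j * m) by rewrite mulr_ge0 ?exprn_ge0 ?p_r_ge0.
pose deficient_at (k : 'I_h.+1) (S : j.-tuple T) := (j <= k)%N && deficient i k S.
apply: le_trans (@ler_sum_cover _ _ _ _ (fun S : j.-tuple T => ~~ good_at 0 S)
    deficient_at (fun S => nb S ^+ m) _ _) _.
- by move=> S; rewrite exprn_ge0.
- by move=> S /not_goodS; rewrite size_tuple => /(_ jh).
rewrite -mulrA mulrDl mulrA lerD ?bad_moment_bound0 //.
have -> : (h.+1 * 2)%:R * δ * (nv ^+ (j + m) * p ^+ (j * m)) =
    \sum_(k < h.+1) (δ + δ) * (nv ^+ (j + m) * p ^+ (j * m)).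
  by rewrite sumr_const card_ord -[RHS]mulr_natl natrM; ring.
apply: ler_sum => k _; have [jk | kj] := leqP j k; last first.
  rewrite big_pred0 => [|S]; last by rewrite /deficient_at leqNgt kj.
  by rewrite mulr_ge0 // addr_ge0 // ltW.
rewrite (eq_bigl (fun S : j.-tuple T => deficient i k S)) => [|S]; last first.
  by rewrite /deficient_at jk.
have jkh : (j <= k <= h)%N by rewrite jk -ltnS ltn_ord.
rewrite mulrA; apply: le_trans (sum_deficient_le δ_gt0 bound mj jkh) _.
have δ_ge0 := ltW δ_gt0.
rewrite ler_wpM2r ?exprn_ge0 ?p_r_ge0 // ler_wpM2r ?exprn_ge0 //.
apply: lerD; apply: ler_iXnr => //; first by case/andP: mj.
by rewrite subn_gt0 ltnS (leq_trans (leq_subr _ _)) // -ltnS.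
Qed.

Lemma bad_moment_bound_iter i t : 0 < alpha -> beta <= 1 -> 0 < t <= 1 ->
  alpha <= iter i (shrink beta h) t -> bad_moment_bound i t.
Proof.
move=> alpha_gt0 beta_le1; have beta01 : 0 < beta <= 1 by rewrite beta_gt0.
elim: i t => [|i IH] t t01 alpha_le.
  have alpha01 : 0 <= alpha <= 1.
    by rewrite ltW //= (le_trans alpha_le); case/andP: t01.
  exact: bad_moment_bound_le alpha_le (bad_moment_bound0 alpha01).
have /andP [s_gt0 s_le] := shrink_gt0_le_half h beta01 t01.
have [t_gt0 t_le1] := andP t01.
have s01 : 0 < shrink beta h t <= 1 by rewrite s_gt0 (le_trans s_le) //; lra.
have alpha_le_s : alpha <= shrink beta h t.
  rewrite iterSr in alpha_le; apply: le_trans alpha_le _.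
  by case/andP: (iter_shrink_gt0_le h beta01 i s01).
set δ := t / (4 * h.+1)%:R.
have δ01 : 0 < δ <= 1.
  rewrite divr_gt0 ?ltr0n ?muln_gt0 //= ler_pdivrMr ?ltr0n ?muln_gt0 // mul1r.
  by rewrite (le_trans t_le1) // ler1n muln_gt0.
apply: bad_moment_bound_le (bad_moment_boundS _ δ01 (IH _ s01 _)); last by rewrite -iterSr.
  have -> : (h.+1 * 2)%:R * δ = t / 2 by rewrite /δ natrM; field; rewrite addrC natr1 pnatr_eq0.
  lra.
by rewrite (ltW alpha_gt0) (le_trans alpha_le_s) //; lra.
Qed.

Lemma good_moment_ge i j : 0 < alpha -> beta <= 1 -> alpha <= iter i (shrink beta h) beta ->
  (0 < r)%N -> (r <= j <= h)%N ->
  (1 - beta) * nv ^+ (j + r) * p ^+ (j * r) <= \sum_(S : j.-tuple T | good_at i S) nb S ^+ r.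
Proof.
move=> alpha_gt0 beta_le1 alpha_le r_gt0 /andP [rj jh].
have beta01 : 0 < beta <= 1 by rewrite beta_gt0.
have r_le_j : (0 < r <= j)%N by rewrite r_gt0 rj.
have bad := bad_moment_bound_iter alpha_gt0 beta_le1 beta01 alpha_le r_le_j jh.
have total := sum_nbhd_expr_ge R r_gt0 e_sym (card_gt0_of_p_r_gt0 p_gt0) (leq_trans r_gt0 rj).
rewrite (bigID (fun S : j.-tuple T => good_at i S)) /= in total.
move: bad total; rewrite -!mulrA; lra.
Qed.

Lemma exists_good_large_nbhd i j : (0 < r)%N -> beta < 1 ->
  (1 - beta) * nv ^+ (j + r) * p ^+ (j * r) <= \sum_(S : j.-tuple T | good_at i S) nb S ^+ r ->
  exists S : j.-tuple T, good_at i S /\ powR (1 - beta) r%:R^-1 * p ^+ j * nv <= nb S.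
Proof.
move=> r_gt0 beta_lt1 mass; set c := powR (1 - beta) r%:R^-1.
have nv_gt0 : 0 < nv by rewrite ltr0n (card_gt0_of_p_r_gt0 p_gt0).
have c_gt0 : 0 < c by rewrite powR_gt0 // subr_gt0.
have cr : c ^+ r = 1 - beta.
  rewrite -powR_mulrn ?powR_ge0 // -powRrM mulVf ?powRr1 ?subr_ge0 ?ltW //.
  by rewrite pnatr_eq0 -lt0n.
have y_gt0 : 0 < c * p ^+ j * nv by rewrite !mulr_gt0 ?exprn_gt0.
have tuples_gt0 : (0 < #|{: j.-tuple T}|)%N.
  by rewrite card_tuple expn_gt0 (card_gt0_of_p_r_gt0 p_gt0).
have [|S gS leS] := exists_ge_of_sum_expr (P := fun S : j.-tuple T => good_at i S)
  r_gt0 y_gt0 tuples_gt0 (fun S => ler0n _ #|nbhd e S|).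
  rewrite card_tuple (_ : (#|T| ^ j)%:R * (c * p ^+ j * nv) ^+ r =
    (1 - beta) * nv ^+ (j + r) * p ^+ (j * r)) // natrX -cr.
  by move: (p_r R e r) (#|T|%:R : R) => P N; rewrite !exprMn -exprM exprD; ring.
by exists S.
Qed.

End Goodness.

Unset Implicit Arguments.
Theorem theorem3p2 (R : realType) (h r : nat) (beta : R) :
  (0 < r)%N -> (r <= h)%N -> 0 < beta -> beta < 1 ->
  exists alpha : R, 0 < alpha /\
    forall (T : finType) (e : rel T), symmetric e -> irreflexive e ->
    forall i j : nat, (1 <= i <= h)%N -> (r <= j <= h)%N ->
      (1 - beta) * (#|T|%:R) ^+ (j + r) * (p_r R e r) ^+ (j * r) <=
        \sum_(S : j.-tuple T | good e alpha beta h r i S) (#|nbhd e S|%:R) ^+ r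
      /\
      ((0 < #|T|)%N ->
       exists S : j.-tuple T, good e alpha beta h r i S /\
         powR (1 - beta) (r%:R^-1) * (p_r R e r) ^+ j * (#|T|%:R)
           <= (#|nbhd e S|%:R)).
Proof.
move=> r_gt0 _ beta_gt0 beta_lt1; have beta01 : 0 < beta <= 1 by rewrite beta_gt0 ltW.
set alpha := iter h (shrink beta h) beta.
have /andP [alpha_gt0 _] := iter_shrink_gt0_le h beta01 h beta01.
exists alpha; split => // T e e_sym _ i j /andP [_ ih] rjh.
have /andP [rj jh] := rjh; have j_gt0 := leq_trans r_gt0 rj.
have := p_r_ge0 R e r; rewrite le_eqVlt => /orP [/eqP p0 | p_gt0].
  have all_good (S : j.-tuple T) : good e alpha beta h r i S.
    by apply: good_of_p_r_eq0 (esym p0) (ltW beta_gt0) _; rewrite size_tuple j_gt0.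
  split.
    by rewrite -p0 expr0n muln_eq0 !gtn_eqF // mulr0 sumr_ge0 // => S _; rewrite exprn_ge0.
  case/card_gt0P => v _; exists [tuple of nseq j v]; split => //.
  by rewrite -p0 expr0n gtn_eqF // mulr0 mul0r.
have mass := good_moment_ge e_sym p_gt0 beta_gt0 alpha_gt0 (ltW beta_lt1)
  (iter_shrink_le h beta01 ih beta01) r_gt0 rjh.
by split => // _; exact: exists_good_large_nbhd mass.
Qed.
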